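(* Let $R$ be a finitely generated $\mathbb{C}$-algebra which is an integral domain. Then $R$ is rigid if and only if $R[X,Y]/(XY)$ (with $X,Y$ indeterminates over $R$) is rigid.
   Context: A derivation of a $\mathbb{C}$-algebra $A$ is a $\mathbb{C}$-linear map $D:A\to A$ satisfying the Leibniz rule; it is locally nilpotent (an LND) if for every $a\in A$ there is $n$ with $D^n(a)=0$. A ring is rigid if its only locally nilpotent derivation is the zero derivation. *)

From HB Require Import structures.
From mathcomp Require Import all_boot all_order all_algebra.
From mathcomp Require Import generic_quotient ring_quotient.
From Stdlib Require Import ClassicalEpsilon.
Set Implicit Arguments. Unset Strict Implicit. Unset Printing Implicit Defensive.
Import GRing.Theory Num.Theory.
Local Open Scope quotient_scope.
Local Open Scope ring_scope.

Section Derivations.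
Variables (C : fieldType) (A : comNzRingType) (phi : C -> A).

Definition is_Cderivation (D : A -> A) : Prop :=
  [/\ forall x y, D (x + y) = D x + D y,
      forall (c : C) x, D (phi c * x) = phi c * D x
    & forall x y, D (x * y) = x * D y + D x * y].

Definition locally_nilpotent (D : A -> A) : Prop :=
  forall a, exists n : nat, iter n D a = 0.

Definition rigid : Prop :=
  forall D : A -> A, is_Cderivation D -> locally_nilpotent D -> forall a, D a = 0.

Inductive in_subalg (s : seq A) : A -> Prop :=
  | sub_scalar (c : C) : in_subalg s (phi c)
  | sub_gen x : x \in s -> in_subalg s x
  | sub_add x y : in_subalg s x -> in_subalg s y -> in_subalg s (x + y)
  | sub_mul x y : in_subalg s x -> in_subalg s y -> in_subalg s (x * y).

Definition fin_gen_alg : Prop := exists s : seq A, forall a, in_subalg s a.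

End Derivations.

(** The ring R[X,Y]/(XY): R[X,Y] is {poly {poly R}}, with X the outer
    variable 'X and Y the inner variable ('X)%:P. *)
Section QuotXY.
Variable R : idomainType.

Definition XYpoly : {poly {poly R}} := 'X * ('X)%:P.

Definition XYideal : pred {poly {poly R}} :=
  fun p => if excluded_middle_informative (exists q, p = q * XYpoly)
           then true else false.

Lemma XYidealP p : reflect (exists q, p = q * XYpoly) (p \in XYideal).
Proof.
rewrite unfold_in /XYideal.
by case: excluded_middle_informative => h; constructor.
Qed.

Lemma size_XYpoly : size XYpoly = 2%N.
Proof.
rewrite /XYpoly mulrC size_mul ?polyX_eq0 ?polyC_eq0 ?polyX_eq0 //.
by rewrite size_polyX size_polyC polyX_eq0.
Qed.

Lemma XYideal_closed : idealr_closed XYideal.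
Proof.
split.
- by apply/XYidealP; exists 0; rewrite mul0r.
- apply/XYidealP => -[q hq].
  have : size (1 : {poly {poly R}}) = size (q * XYpoly) by rewrite -hq.
  rewrite size_poly1.
  have [->|qn0] := eqVneq q 0; first by rewrite mul0r size_poly0.
  rewrite size_mul // ?size_XYpoly; last by rewrite -size_poly_eq0 size_XYpoly.
  rewrite addn2 /= => -[] /eqP; rewrite eq_sym size_poly_eq0.
  by rewrite (negPf qn0).
- move=> a u v /XYidealP[qu ->] /XYidealP[qv ->].
  by apply/XYidealP; exists (a * qu + qv); rewrite mulrDl mulrA.
Qed.

HB.instance Definition _ := isIdealr.Build {poly {poly R}} XYideal XYideal_closed.

Definition XYidealr : idealr {poly {poly R}} := Idealr.clone _ XYideal _.
Definition RXY : comNzRingType := {ideal_quot XYidealr}.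

Definition RXY_map (C : fieldType) (f : {rmorphism C -> R}) (c : C) : RXY :=
  \pi_RXY ((f c)%:P%:P).

End QuotXY.

From HB Require Import structures.
From mathcomp Require Import all_boot all_order all_algebra.
From mathcomp Require Import generic_quotient ring_quotient ring.
Set Implicit Arguments. Unset Strict Implicit. Unset Printing Implicit Defensive.
Import GRing.Theory Num.Theory.
Local Open Scope ring_scope.
Local Open Scope quotient_scope.

(* In characteristic zero, an element dividing its image under a locally
   nilpotent derivation of a domain is killed by it.  Hence, if [R] is rigid,
   every LND [d] of [R[T]] with [T | d T] vanishes: [T] is then a constant of
   [d], and evaluating at [T = c] for [c] in [C] yields LNDs of [R].

   Let [D] be an LND of [B = R[X,Y]/(XY)].  Differentiating [XY = 0] shows
   [X | D X] and [Y | D Y].  Each branch map [B -> R[X]] ([Y = 0]) and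
   [B -> R[Y]] ([X = 0]) turns [D] into an LND of a polynomial ring as above,
   so both kill the image of [D]; as they are jointly injective, [D = 0].
   Conversely an LND of [R] acts coefficientwise on [R[X,Y]], preserves
   [(XY)], and descends to [B]. *)

Section Derivation.
Variables (A : comNzRingType) (D : A -> A).
Hypothesis derD : forall x y, D (x + y) = D x + D y.
Hypothesis derM : forall x y, D (x * y) = x * D y + D x * y.

Lemma der0 : D 0 = 0.
Proof. by apply: (addrI (D 0)); rewrite -derD !addr0. Qed.

Lemma derN x : D (- x) = - D x.
Proof. by apply: (addrI (D x)); rewrite -derD !subrr der0. Qed.

Lemma derB x y : D (x - y) = D x - D y.
Proof. by rewrite derD derN. Qed.

Lemma der1 : D 1 = 0.
Proof. by apply: (addrI (D 1)); rewrite addr0 -[in RHS](mulr1 1) derM mul1r mulr1. Qed.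

Lemma iter_der0 n : iter n D 0 = 0.
Proof. by elim: n => //= n ->; exact: der0. Qed.

Lemma iter_derD n x y : iter n D (x + y) = iter n D x + iter n D y.
Proof. by elim: n => //= n ->; rewrite derD. Qed.

Lemma iter_der_eq0_le m n x : iter m D x = 0 -> (m <= n)%N -> iter n D x = 0.
Proof. by move=> Dmx /subnK <-; rewrite iterD Dmx iter_der0. Qed.

(* Only one term of Leibniz's rule survives. *)
Lemma iter_derM_top n m k a b : (m + k)%N = n ->
    iter m.+1 D a = 0 -> iter k.+1 D b = 0 ->
  iter n D (a * b) = 'C(n, m)%:R * (iter m D a * iter k D b).
Proof.
elim: n m k a b => [|n IH] m k a b.
  by move=> /eqP; rewrite addn_eq0 => /andP[/eqP-> /eqP->] _ _; rewrite mul1r.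
move=> mkn Da Db; rewrite iterSr derM iter_derD.
have right_term : iter n D (a * D b) =
    if k is k'.+1 then 'C(n, m)%:R * (iter m D a * iter k D b) else 0.
  case: k mkn Db => [|k'] mkn Db.
    by move: Db => /= ->; rewrite mulr0 iter_der0.
  by rewrite (IH m k') -?iterSr //; move: mkn; rewrite addnS => -[].
have left_term : iter n D (D a * b) =
    if m is m'.+1 then 'C(n, m')%:R * (iter m D a * iter k D b) else 0.
  case: m mkn Da {right_term} => [|m'] mkn Da.
    by move: Da => /= ->; rewrite mul0r iter_der0.
  by rewrite (IH m' k) -?iterSr //; move: mkn; rewrite addSn => -[].
rewrite right_term left_term.
case: m k mkn {Da Db right_term left_term} => [|m'] [|k'] //= mkn.
- by rewrite addr0 !bin0.
- by move: mkn; rewrite addn0 => -[->]; rewrite add0r !binn.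
- by rewrite binS natrD mulrDl addrC.
Qed.

Lemma last_nonzero_iter a n : iter n D a = 0 -> a != 0 ->
  exists m, iter m D a != 0 /\ iter m.+1 D a = 0.
Proof.
elim: n => [|n IH] /=; first by move=> ->; rewrite eqxx.
case: (eqVneq (iter n D a) 0) => [/IH IHa _ /IHa //|Dna Dn1a _]; by exists n.
Qed.
End Derivation.

(* If [a] divides [D a], compare the last non-vanishing orders [m] of [a] and
   [k] of [g]: [D^(m+k) (a g) = D^(m+k+1) a = 0], while Leibniz's rule gives
   [binomial (m+k) m * D^m a * D^k g <> 0] in characteristic zero. *)
Lemma lnd_dvd_eq0 (A : idomainType) (D : A -> A) :
    (forall x y, D (x + y) = D x + D y) ->
    (forall x y, D (x * y) = x * D y + D x * y) ->
    (forall a, exists n, iter n D a = 0) ->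
    (forall n, (0 < n)%N -> n%:R != 0 :> A) ->
  forall a g, D a = a * g -> D a = 0.
Proof.
move=> derD derM lnd char0 a g Da; apply/eqP/negPn/negP => Da_neq0.
have a_neq0 : a != 0 by apply: contraNneq Da_neq0 => a0; rewrite Da a0 mul0r.
have g_neq0 : g != 0 by apply: contraNneq Da_neq0 => g0; rewrite Da g0 mulr0.
have [[na Dna] [ng Dng]] := (lnd a, lnd g).
have [m [Dma Dm1a]] := last_nonzero_iter Dna a_neq0.
have [k [Dkg Dk1g]] := last_nonzero_iter Dng g_neq0.
have := iter_derM_top derD derM (erefl (m + k)%N) Dm1a Dk1g.
rewrite -Da -iterSr (iter_der_eq0_le derD Dm1a) ?ltnS ?leq_addr //.
move/esym/eqP; rewrite !mulf_eq0 (negPf Dma) (negPf Dkg) !orbF.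
by apply/negP/char0; rewrite bin_gt0 leq_addr.
Qed.

Section IdealQuotient.
Variables (T : comNzRingType) (I : idealr T).
Local Notation Q := {ideal_quot I}.

Lemma pi_idealr_eq a b : a - b \in I -> \pi_Q a = \pi_Q b.
Proof. by move=> abI; apply/eqP; rewrite -Quotient.idealrBE. Qed.

Lemma repr_pi_idealr q : repr (\pi_Q q) - q \in I.
Proof. by rewrite Quotient.idealrBE reprK. Qed.

Section Lift.
Variables (S : nzRingType) (g : {rmorphism T -> S}).
Hypothesis gI : {in I, forall q, g q = 0}.

(* The proof argument is unused in the body; carrying it lets the ring
   morphism instances below be keyed on [quot_lift]. *)
Definition quot_lift of {in I, forall q, g q = 0} := fun b : Q => g (repr b).

Lemma quot_lift_pi q : quot_lift gI (\pi_Q q) = g q.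
Proof. by apply/eqP; rewrite -subr_eq0 -rmorphB gI ?repr_pi_idealr. Qed.

Lemma quot_lift_is_zmod_morphism : zmod_morphism (quot_lift gI).
Proof.
by move=> a b; rewrite -(reprK a) -(reprK b) -rmorphB !quot_lift_pi rmorphB.
Qed.

Lemma quot_lift_is_monoid_morphism : monoid_morphism (quot_lift gI).
Proof.
split; first by rewrite -(rmorph1 \pi_Q) quot_lift_pi rmorph1.
by move=> a b; rewrite -(reprK a) -(reprK b) -rmorphM !quot_lift_pi rmorphM.
Qed.
End Lift.

Section QuotientDerivation.
Variables (C : fieldType) (phi : C -> T) (D : T -> T).
Hypothesis HD : is_Cderivation phi D.
Hypothesis D_ideal : {in I, forall q, D q \in I}.

Definition quot_der (b : Q) : Q := \pi_Q (D (repr b)).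

Lemma quot_der_pi q : quot_der (\pi_Q q) = \pi_Q (D q).
Proof.
have [derD _ _] := HD.
by apply: pi_idealr_eq; rewrite -derB // D_ideal ?repr_pi_idealr.
Qed.

Lemma quot_der_is_Cderivation : is_Cderivation (fun c => \pi_Q (phi c)) quot_der.
Proof.
have [derD derC derM] := HD.
split=> [x y|c x|x y].
- by rewrite -[x]reprK -[y]reprK -rmorphD !quot_der_pi derD rmorphD.
- by rewrite -[x]reprK -rmorphM !quot_der_pi derC rmorphM.
- by rewrite -[x]reprK -[y]reprK -rmorphM !quot_der_pi derM rmorphD !rmorphM.
Qed.

Lemma quot_der_lnd : locally_nilpotent D -> locally_nilpotent quot_der.
Proof.
move=> lnd b; have [n Dn] := lnd (repr b); exists n.
suff -> : iter n quot_der b = \pi_Q (iter n D (repr b)) by rewrite Dn rmorph0.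
by rewrite -{1}(reprK b); elim: n {Dn} => //= n ->; rewrite quot_der_pi.
Qed.
End QuotientDerivation.
End IdealQuotient.

HB.instance Definition _ T I S g gI :=
  GRing.isZmodMorphism.Build _ _ (@quot_lift T I S g gI) (quot_lift_is_zmod_morphism gI).
HB.instance Definition _ T I S g gI :=
  GRing.isMonoidMorphism.Build _ _ (@quot_lift T I S g gI) (quot_lift_is_monoid_morphism gI).

Lemma der_kernel_stable (B P : comNzRingType) (p : {rmorphism B -> P})
    (D : B -> B) (v : B) :
    (forall x y, D (x * y) = x * D y + D x * y) ->
    (forall b, p b = 0 -> exists c, b = v * c) -> p v = 0 -> p (D v) = 0 ->
  forall b, p b = 0 -> p (D b) = 0.
Proof.
move=> derM ker_p pv pDv b /ker_p[c ->].
by rewrite derM rmorphD !rmorphM pv pDv !mul0r addr0.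
Qed.

Section InducedDerivation.
Variables (C : fieldType) (B P : comNzRingType).
Variables (phiB : C -> B) (phiP : C -> P) (p : {rmorphism B -> P}) (s : P -> B).
Hypothesis sK : cancel s p.
Hypothesis p_phi : forall c, p (phiB c) = phiP c.
Variable D : B -> B.
Hypothesis HD : is_Cderivation phiB D.
Hypothesis D_ker : forall b, p b = 0 -> p (D b) = 0.

Definition induced_der (q : P) : P := p (D (s q)).

Lemma induced_derE b : induced_der (p b) = p (D b).
Proof.
have [derD _ _] := HD.
have /D_ker : p (s (p b) - b) = 0 by rewrite rmorphB sK subrr.
by rewrite derB // rmorphB => /eqP; rewrite subr_eq0 => /eqP.
Qed.

Lemma induced_der_is_Cderivation : is_Cderivation phiP induced_der.
Proof.
have [derD derC derM] := HD.
split=> [x y|c x|x y].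
- by rewrite -[x]sK -[y]sK -rmorphD !induced_derE derD rmorphD.
- by rewrite -[x]sK -p_phi -rmorphM !induced_derE derC rmorphM.
- by rewrite -[x]sK -[y]sK -rmorphM !induced_derE derM rmorphD !rmorphM.
Qed.

Lemma induced_der_lnd : locally_nilpotent D -> locally_nilpotent induced_der.
Proof.
move=> lnd q; have [n Dn] := lnd (s q); exists n.
suff -> : iter n induced_der q = p (iter n D (s q)) by rewrite Dn rmorph0.
by rewrite -{1}(sK q); elim: n {Dn} => //= n ->; rewrite induced_derE.
Qed.
End InducedDerivation.

Lemma poly_eq0_on_rmorph_image (C : numFieldType) (R : idomainType)
    (f : {rmorphism C -> R}) (q : {poly R}) :
  (forall c, q.[f c] = 0) -> q = 0.
Proof.
move=> q_f; apply/eqP/negPn/negP => q_neq0.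
pose s := [seq (i%:R : C) | i <- iota 0 (size q)].
have s_uniq : uniq s.
  by rewrite map_inj_uniq ?iota_uniq // => i j /eqP; rewrite eqr_nat => /eqP.
have roots_q : all (root q) [seq f c | c <- s] by apply/allP => _ /mapP[c _ ->]; apply/eqP.
have := max_ring_poly_roots q_neq0 roots_q.
by rewrite map_uniq_roots s_uniq !size_map size_iota ltnn => /(_ isT).
Qed.

Section RigidPolynomialRing.
Variables (C : numFieldType) (R : idomainType) (f : {rmorphism C -> R}).
Variable d : {poly R} -> {poly R}.
Hypothesis Hd : is_Cderivation (fun c => (f c)%:P) d.
Hypothesis Ld : locally_nilpotent d.

Lemma lnd_polyX_eq0 g : d 'X = 'X * g -> d 'X = 0.
Proof.
have [derD _ derM] := Hd; apply: lnd_dvd_eq0 => // n n_gt0.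
by rewrite -polyC_natr polyC_eq0 -(rmorph_nat f) fmorph_eq0 pnatr_eq0 -lt0n.
Qed.

Section Evaluation.
Hypothesis dX : d 'X = 0.

Definition horner_der (a r : R) : R := (d r%:P).[a].

Lemma horner_derE c q : (d q).[f c] = horner_der (f c) q.[f c].
Proof.
have [derD derC derM] := Hd.
have dfc : d (f c)%:P = 0 by rewrite -[_%:P]mulr1 derC der1 ?mulr0.
have /factor_theorem[h qE] : root (q - (q.[f c])%:P) (f c).
  by rewrite /root hornerD hornerN hornerC subrr.
have -> : q = (q.[f c])%:P + h * ('X - (f c)%:P) by rewrite -qE addrC subrK.
rewrite derD derM derB // dX dfc subrr mulr0 add0r.
by rewrite /horner_der !hornerE subrr !mulr0 !addr0.
Qed.

Lemma horner_der_is_Cderivation a : is_Cderivation f (horner_der a).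
Proof.
have [derD derC derM] := Hd.
split=> [x y|c x|x y]; rewrite /horner_der.
- by rewrite polyCD derD hornerD.
- by rewrite polyCM derC hornerCM.
- by rewrite polyCM derM hornerD hornerCM hornerM hornerC.
Qed.

Lemma horner_der_lnd c : locally_nilpotent (horner_der (f c)).
Proof.
move=> r; have [n dn] := Ld r%:P; exists n.
suff -> : iter n (horner_der (f c)) r = (iter n d r%:P).[f c] by rewrite dn horner0.
by elim: n {dn} => [|n IH] /=; rewrite ?hornerC // horner_derE IH.
Qed.
End Evaluation.

Lemma rigid_lnd_poly_eq0 g : rigid f -> d 'X = 'X * g -> forall q, d q = 0.
Proof.
move=> R_rigid /lnd_polyX_eq0 dX; have [derD _ derM] := Hd.
have dC r : d r%:P = 0.
  apply: (poly_eq0_on_rmorph_image (f := f)) => c; rewrite horner_derE // hornerC.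
  exact: R_rigid (horner_der_is_Cderivation _) (horner_der_lnd dX c) _.
elim/poly_ind => [|q r dq]; first exact: der0 derD.
by rewrite derD derM dq dX dC mulr0 mul0r !addr0.
Qed.
End RigidPolynomialRing.

Lemma rigid_quotient_poly_der_eq0 (C : numFieldType) (R : idomainType)
    (f : {rmorphism C -> R}) (B : comNzRingType) (phi : C -> B)
    (p : {rmorphism B -> {poly R}}) (s : {poly R} -> B) (D : B -> B) (u v : B) :
    rigid f -> cancel s p -> (forall c, p (phi c) = (f c)%:P) ->
    is_Cderivation phi D -> locally_nilpotent D ->
    (forall b, p b = 0 -> exists c, b = v * c) -> p v = 0 -> p (D v) = 0 ->
    p u = 'X -> (exists c, D u = u * c) ->
  forall b, p (D b) = 0.
Proof.
move=> R_rigid sK p_phi HD lnd ker_p pv pDv pu [c Du].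
have [_ _ derM] := HD.
have D_ker := der_kernel_stable derM ker_p pv pDv.
have pDE := induced_derE sK HD D_ker.
have := rigid_lnd_poly_eq0 (induced_der_is_Cderivation sK p_phi HD D_ker)
  (induced_der_lnd sK HD D_ker lnd) R_rigid.
move=> d_eq0; suff dX : induced_der p s D 'X = 'X * p c.
  by move=> b; rewrite -pDE (d_eq0 _ dX).
by rewrite -pu pDE Du rmorphM.
Qed.

Section Branches.
Variable R : idomainType.
Local Notation B := (RXY R).

Definition RXY_X : B := \pi_B 'X.
Definition RXY_Y : B := \pi_B ('X%:P).

Lemma RXY_XY : RXY_X * RXY_Y = 0.
Proof.
rewrite -rmorphM -(rmorph0 \pi_B); apply: pi_idealr_eq.
by rewrite subr0; apply/XYidealP; exists 1; rewrite mul1r.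
Qed.

Lemma XYideal_evalY0 : {in XYidealr R, forall q, map_poly (horner_eval 0) q = 0}.
Proof.
move=> _ /XYidealP[h ->]; rewrite /XYpoly !rmorphM /= map_polyC /=.
by rewrite horner_evalE hornerX polyC0 !mulr0.
Qed.

Lemma XYideal_evalX0 : {in XYidealr R, forall q, horner_eval 0 q = 0}.
Proof.
move=> _ /XYidealP[h ->].
by rewrite horner_evalE /XYpoly !hornerM hornerX !mul0r mulr0.
Qed.

(* Restrictions to the branches [Y = 0] and [X = 0] of [XY = 0]; recall that
   [Y] is the inner variable. *)
Definition projX : {rmorphism B -> {poly R}} := quot_lift XYideal_evalY0.
Definition projY : {rmorphism B -> {poly R}} := quot_lift XYideal_evalX0.

Lemma projX_pi q : projX (\pi_B q) = map_poly (horner_eval 0) q.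
Proof. exact: quot_lift_pi. Qed.

Lemma projY_pi q : projY (\pi_B q) = q.[0].
Proof. exact: quot_lift_pi. Qed.

Lemma projX_X : projX RXY_X = 'X.
Proof. by rewrite projX_pi map_polyX. Qed.

Lemma projX_Y : projX RXY_Y = 0.
Proof. by rewrite projX_pi map_polyC /= horner_evalE hornerX. Qed.

Lemma projY_X : projY RXY_X = 0.
Proof. by rewrite projY_pi hornerX. Qed.

Lemma projY_Y : projY RXY_Y = 'X.
Proof. by rewrite projY_pi hornerC. Qed.

Lemma projX_const r : projX (\pi_B r%:P%:P) = r%:P.
Proof. by rewrite projX_pi map_polyC /= horner_evalE hornerC. Qed.

Lemma projY_const r : projY (\pi_B r%:P%:P) = r%:P.
Proof. by rewrite projY_pi hornerC. Qed.

Definition liftX (q : {poly R}) : B := \pi_B (map_poly polyC q).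
Definition liftY (q : {poly R}) : B := \pi_B q%:P.

Lemma liftXK : cancel liftX projX.
Proof.
move=> q; rewrite projX_pi -map_poly_comp_id0 ?horner_evalE ?horner0 //.
by rewrite (eq_map_poly (g := id)) ?map_poly_id // => r; rewrite /= horner_evalE hornerC.
Qed.

Lemma liftYK : cancel liftY projY.
Proof. by move=> q; rewrite projY_pi hornerC. Qed.

Lemma projX_eq0 b : projX b = 0 -> exists c, b = RXY_Y * c.
Proof.
rewrite -(reprK b) projX_pi; move: (repr b) => q qY0.
exists (\pi_B (map_poly (drop_poly 1) q)); rewrite -rmorphM mulrC; congr \pi_B.
apply/polyP => i; rewrite coefMC coef_map_id0 ?drop_poly0r //.
have : (q`_i).[0] = 0.
  by have /polyP/(_ i) := qY0; rewrite coef_map_id0 ?horner_evalE ?horner0 ?coef0.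
rewrite horner_coef0 => qi0; rewrite -{1}(poly_take_drop 1 q`_i) expr1.
suff -> : take_poly 1 q`_i = 0 by rewrite add0r.
by apply/polyP => -[|j]; rewrite coef_take_poly coef0.
Qed.

Lemma projY_eq0 b : projY b = 0 -> exists c, b = RXY_X * c.
Proof.
rewrite -(reprK b) projY_pi; move: (repr b) => q qX0.
exists (\pi_B (drop_poly 1 q)); rewrite -rmorphM mulrC; congr \pi_B.
rewrite -{1}(poly_take_drop 1 q) expr1.
suff -> : take_poly 1 q = 0 by rewrite add0r.
by apply/polyP => -[|j]; rewrite coef_take_poly coef0 // -horner_coef0.
Qed.

Lemma projXY_inj b : projX b = 0 -> projY b = 0 -> b = 0.
Proof.
move=> /projX_eq0[c ->]; rewrite rmorphM projY_Y => /eqP.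
rewrite mulf_eq0 polyX_eq0 => /eqP/projY_eq0[c' ->].
by rewrite mulrA [RXY_Y * _]mulrC RXY_XY mul0r.
Qed.
End Branches.

Arguments projX {R}.
Arguments projY {R}.

Section PolyDerivation.
Variables (A : comNzRingType) (d : A -> A).
Hypothesis derD : forall x y, d (x + y) = d x + d y.
Hypothesis derM : forall x y, d (x * y) = x * d y + d x * y.
Let d0 : d 0 = 0 := der0 derD.

Definition poly_der (q : {poly A}) : {poly A} := map_poly d q.

Lemma poly_derD p q : poly_der (p + q) = poly_der p + poly_der q.
Proof. by apply/polyP => i; rewrite coefD !coef_map_id0 // coefD derD. Qed.

Lemma poly_derC a : poly_der a%:P = (d a)%:P.
Proof. by apply/polyP => i; rewrite coef_map_id0 // !coefC; case: (i == 0%N). Qed.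

Lemma poly_derMX q : poly_der (q * 'X) = poly_der q * 'X.
Proof.
by apply/polyP => -[|i]; rewrite !coefMX /= ?coef_map_id0 ?coefMX.
Qed.

Lemma poly_derX : poly_der 'X = 0.
Proof.
apply/polyP => i; rewrite coef_map_id0 // coefX coef0.
by case: (i == 1%N); [exact: der1 derM | exact: d0].
Qed.

Lemma poly_derCM a q : poly_der (a%:P * q) = a%:P * poly_der q + (d a)%:P * q.
Proof. by apply/polyP => i; rewrite coefD !coefCM !coef_map_id0 // coefCM derM. Qed.

Lemma poly_derM p q : poly_der (p * q) = p * poly_der q + poly_der p * q.
Proof.
elim/poly_ind: p => [|p a IH]; first by rewrite mul0r /poly_der map_poly0 !mul0r addr0.
rewrite mulrDl mulrAC poly_derD poly_derMX IH poly_derCM poly_derD poly_derMX.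
by rewrite poly_derC; ring.
Qed.

Lemma poly_der_lnd : locally_nilpotent d -> locally_nilpotent poly_der.
Proof.
move=> lnd; elim/poly_ind => [|q a [n dnq]]; first by exists 0%N.
have [m dma] := lnd a; exists (maxn n m).
have iter_MX k p : iter k poly_der (p * 'X) = iter k poly_der p * 'X.
  by elim: k => //= k ->; rewrite poly_derMX.
have iter_C k : iter k poly_der a%:P = (iter k d a)%:P.
  by elim: k => //= k ->; rewrite poly_derC.
rewrite (iter_derD poly_derD) iter_MX iter_C.
rewrite (iter_der_eq0_le poly_derD dnq) ?leq_maxl //.
by rewrite (iter_der_eq0_le derD dma) ?leq_maxr // mul0r add0r.
Qed.
End PolyDerivation.

Lemma poly_der_is_Cderivation (C : fieldType) (A : comNzRingType) (phi : C -> A)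
    (d : A -> A) :
  is_Cderivation phi d -> is_Cderivation (fun c => (phi c)%:P) (poly_der d).
Proof.
move=> [derD derC derM].
have dphi c : d (phi c) = 0 by rewrite -[phi c]mulr1 derC der1 ?mulr0.
split=> [p q|c q|p q]; rewrite ?poly_derD ?poly_derM //.
by rewrite poly_derC // dphi polyC0 mul0r addr0.
Qed.

Lemma poly_der2_XYideal (R : idomainType) (d : R -> R) :
    (forall x y, d (x + y) = d x + d y) ->
    (forall x y, d (x * y) = x * d y + d x * y) ->
  {in XYidealr R, forall q, poly_der (poly_der d) q \in XYidealr R}.
Proof.
move=> derD derM _ /XYidealP[h ->]; apply/XYidealP; exists (poly_der (poly_der d) h).
have [derD1 derM1] := (poly_derD derD, poly_derM derD derM).
rewrite (poly_derM derD1 derM1) /XYpoly (poly_derM derD1 derM1) (poly_derC derD1).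
rewrite (poly_derX derD derM) (poly_derX derD1 derM1) polyC0.
by rewrite !mulr0 mul0r !addr0 mulr0 add0r.
Qed.

Section Rigidity.
Variables (C : numFieldType) (R : idomainType) (f : {rmorphism C -> R}).

Lemma rigid_RXY : rigid f -> rigid (RXY_map f).
Proof.
move=> R_rigid D HD lnd; have [derD _ derM] := HD.
have DXY : D (RXY_X R) * RXY_Y R + RXY_X R * D (RXY_Y R) = 0.
  by rewrite addrC -derM RXY_XY der0.
have projY_DX : projY (D (RXY_X R)) = 0.
  move/(congr1 projY)/eqP: DXY; rewrite rmorphD !rmorphM projY_X projY_Y rmorph0.
  by rewrite mul0r addr0 mulf_eq0 polyX_eq0 orbF => /eqP.
have projX_DY : projX (D (RXY_Y R)) = 0.
  move/(congr1 projX)/eqP: DXY; rewrite rmorphD !rmorphM projX_X projX_Y rmorph0.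
  by rewrite mulr0 add0r mulf_eq0 polyX_eq0 => /eqP.
have projX_D := rigid_quotient_poly_der_eq0 R_rigid (@liftXK R)
  (fun c => projX_const (f c)) HD lnd (@projX_eq0 R) (@projX_Y R) projX_DY
  (@projX_X R) (projY_eq0 projY_DX).
have projY_D := rigid_quotient_poly_der_eq0 R_rigid (@liftYK R)
  (fun c => projY_const (f c)) HD lnd (@projY_eq0 R) (@projY_X R) projY_DX
  (@projY_Y R) (projX_eq0 projX_DY).
by move=> b; apply: projXY_inj.
Qed.

Lemma rigid_from_RXY : rigid (RXY_map f) -> rigid f.
Proof.
move=> RXY_rigid d Hd lnd r; have [derD _ derM] := Hd.
have D_ideal := poly_der2_XYideal derD derM.
have HD := poly_der_is_Cderivation (poly_der_is_Cderivation Hd).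
have := RXY_rigid _ (quot_der_is_Cderivation HD D_ideal)
  (quot_der_lnd HD D_ideal (poly_der_lnd (poly_derD derD) (poly_der_lnd derD lnd)))
  (\pi_(RXY R) r%:P%:P).
rewrite (quot_der_pi HD D_ideal) (poly_derC (poly_derD derD)) (poly_derC derD).
by move/(congr1 projY); rewrite projY_const rmorph0 => /polyC_inj.
Qed.
End Rigidity.

Theorem lemma2p4 (C : numClosedFieldType) (R : idomainType)
    (f : {rmorphism C -> R}) :
  fin_gen_alg f ->
  (rigid f <-> rigid (RXY_map f)).
Proof. by move=> _; split; [exact: rigid_RXY | exact: rigid_from_RXY]. Qed.
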